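(* Let $G$ be a realization of a bounded budget network creation game $(b_1,\dots,b_n)$-BG and let $u$ be a vertex of $G$. If either $c_{MAX}(u)\le 2$ and $u$ is not contained in any brace, or $c_{MAX}(u)=1$, then $u$ is playing its best response in both the MAX version and the SUM version of the game.
   Context: Bounded budget network creation game $(b_1,\dots,b_n)$-BG: $n$ players with integer budgets $0\le b_i\le n-1$. A strategy of player $i$ is a set $S_i\subseteq\{1,\dots,n\}\setminus\{i\}$ with $|S_i|=b_i$; a profile is realized by the directed graph $G$ on $u_1,\dots,u_n$ with an arc $\overrightarrow{u_iu_j}$ iff $j\in S_i$ (a realization). A brace is a pair $\{u,v\}$ such that both $\overrightarrow{uv}$ and $\overrightarrow{vu}$ are arcs. $U(G)$ is the undirected multigraph obtained by ignoring directions; $\operatorname{dist}(u,v)$ is the distance in $U(G)$, defined as $n^2$ between different components. SUM cost: $c_{SUM}(u)=\sum_v\operatorname{dist}(u,v)$; MAX cost: $c_{MAX}(u)=\max_v\operatorname{dist}(u,v)+(\kappa-1)n^2$, $\kappa$ the number of components of $U(G)$. A vertex plays its best response (in a version) if it cannot decrease its cost (of that version) by changing its own strategy while the other strategies are fixed. *)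

From mathcomp Require Import all_boot all_order.
Set Implicit Arguments. Unset Strict Implicit. Unset Printing Implicit Defensive.

Section BG.
Variable n : nat.

(* A strategy profile: player i buys arcs to the vertices in S i. *)
Definition profile := 'I_n -> {set 'I_n}.

Definition realization (b : 'I_n -> nat) (S : profile) : Prop :=
  forall i : 'I_n, i \notin S i /\ #|S i| = b i.

Definition adjU (S : profile) : rel 'I_n :=
  fun u v => (v \in S u) || (u \in S v).

Fixpoint ball (S : profile) (k : nat) (u : 'I_n) : {set 'I_n} :=
  if k is k'.+1 then
    ball S k' u :|: [set v | [exists x in ball S k' u, adjU S x v]]
  else [set u].

(* distance in U(G); n^2 between different components.
   A shortest path in a graph with n vertices has length < n. *)
Definition dist (S : profile) (u v : 'I_n) : nat :=
  \big[minn/n ^ 2]_(k < n | v \in ball S k u) k.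

Definition ncomp (S : profile) : nat := n_comp (adjU S) 'I_n.

Definition cSUM (S : profile) (u : 'I_n) : nat := \sum_(v : 'I_n) dist S u v.

Definition cMAX (S : profile) (u : 'I_n) : nat :=
  \max_(v : 'I_n) dist S u v + (ncomp S - 1) * n ^ 2.

Definition in_brace (S : profile) (u : 'I_n) : Prop :=
  exists v : 'I_n, v \in S u /\ u \in S v.

Definition deviate (S : profile) (u : 'I_n) (T : {set 'I_n}) : profile :=
  fun i => if i == u then T else S i.

Definition best_response (c : profile -> 'I_n -> nat) (b : 'I_n -> nat)
    (S : profile) (u : 'I_n) : Prop :=
  forall T : {set 'I_n}, u \notin T -> #|T| = b u ->
    c S u <= c (deviate S u T) u.

End BG.

(** If [cMAX S u <= 2], every vertex lies within distance 2 of [u], so the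
    distance from [u] to [v] is 0, 1 or 2 according as [v] is [u], a neighbour
    of [u] in [U(G)] or neither.  Both costs of [u] are then functions of the
    number of its neighbours alone, nonincreasing in that number, and after
    any deviation the distances are still bounded below by these values.  It
    thus suffices that a deviation cannot give [u] more neighbours: without a
    brace [u] already has [b u] neighbours of its own besides those buying an
    arc to it, and if [cMAX S u = 1] it is adjacent to every other vertex. *)

From mathcomp Require Import all_boot all_order zify.
Set Implicit Arguments. Unset Strict Implicit. Unset Printing Implicit Defensive.

Lemma bigmin_le (I : eqType) (r : seq I) (P : pred I) (F : I -> nat) x j :
  j \in r -> P j -> \big[minn/x]_(i <- r | P i) F i <= F j.
Proof.
elim: r => [//|a r IH]; rewrite inE big_cons => /orP[/eqP<- ->|jr Pj].
  exact: geq_minl.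
case: (P a); last exact: IH.
exact: leq_trans (geq_minr _ _) (IH jr Pj).
Qed.

Lemma sum_nat_bool (I : finType) (P : pred I) : \sum_i (P i : nat) = #|P|.
Proof.
rewrite -sum1_card [RHS]big_mkcond; apply: eq_bigr => i _.
by rewrite unfold_in; case: (P i).
Qed.

Section NetworkCreation.
Variable n : nat.
Implicit Types (S : profile n) (u v : 'I_n) (T : {set 'I_n}).

Definition nbhd S u : {set 'I_n} := [set v | adjU S u v].

Definition buyers S u : {set 'I_n} := [set v | u \in S v].

Definition tdist S u v : nat := minn (dist S u v) 2.

Lemma neq_ord_gt1 u v : v != u -> 1 < n.
Proof. by move=> vu; rewrite -(card_ord n); apply/card_gt1P; exists v, u. Qed.

Lemma adjUxx S u : adjU S u u = (u \in S u).
Proof. exact: orbb. Qed.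

Lemma ball1 S u v : (v \in ball S 1 u) = (v == u) || adjU S u v.
Proof.
rewrite /= !inE; congr (_ || _); apply/existsP/idP => [[x]|uv].
  by rewrite inE => /andP[/eqP->].
by exists u; rewrite inE eqxx.
Qed.

Lemma dist_le S u v k : k < n -> v \in ball S k u -> dist S u v <= k.
Proof.
move=> lt_kn vk.
exact: (@bigmin_le _ _ _ (fun i : 'I_n => nat_of_ord i) _ (Ordinal lt_kn)
  (mem_index_enum _) vk).
Qed.

Lemma dist_ge S u v m : m <= n ^ 2 ->
  (forall k, v \in ball S k u -> m <= k) -> m <= dist S u v.
Proof.
move=> le_m_n2 ball_m; rewrite /dist.
by elim/big_ind: _ => // [x y mx my|i /ball_m //]; rewrite leq_min mx my.
Qed.

Lemma dist_gt0 S u v : v != u -> 0 < dist S u v.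
Proof.
move=> vu; apply: dist_ge => [|[|k] //]; last by rewrite /= inE (negbTE vu).
by rewrite expn_gt0; have := ltn_ord u; lia.
Qed.

Lemma dist_ge2 S u v : v != u -> ~~ adjU S u v -> 2 <= dist S u v.
Proof.
move=> vu nadj; apply: dist_ge => [|[|[|k]] //].
- have n_gt1 := neq_ord_gt1 vu.
  by rewrite -mulnn (leq_mul n_gt1 (ltnW n_gt1)).
- by rewrite /= inE (negbTE vu).
- by rewrite ball1 (negbTE vu) (negbTE nadj).
Qed.

Lemma tdistE S u v : tdist S u v = (v != u) + ((v != u) && (v \notin nbhd S u)).
Proof.
rewrite /tdist inE; have [->|vu] /= := eqVneq v u.
  apply/eqP; rewrite -leqn0 geq_min (@dist_le _ _ _ 0) ?inE //.
  exact: leq_ltn_trans (leq0n _) (ltn_ord u).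
case: (boolP (adjU S u v)) => adj /=; last exact/minn_idPr/dist_ge2.
have n_gt1 := neq_ord_gt1 vu.
have dist1 : dist S u v <= 1 by apply: dist_le n_gt1 _; rewrite ball1 adj orbT.
by have := dist_gt0 S vu; move: dist1; lia.
Qed.

Lemma nbhd_subC1 S u : u \notin S u -> nbhd S u \subset [set~ u].
Proof.
move=> uSu; apply/subsetP => v; rewrite !inE; apply: contraTN => /eqP->.
by rewrite adjUxx.
Qed.

Lemma card_nbhd_le S u : u \notin S u -> #|nbhd S u| <= n.-1.
Proof. by move/nbhd_subC1/subset_leq_card; rewrite cardsC1 card_ord. Qed.

Lemma sum_tdist S u : u \notin S u -> \sum_v tdist S u v = n.-1.*2 - #|nbhd S u|.
Proof.
move=> uSu; under eq_bigr do rewrite tdistE.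
rewrite big_split /= !sum_nat_bool.
have -> : #|[pred v | v != u]| = #|[set~ u]| by apply: eq_card => v; rewrite !inE.
have -> : #|[pred v | (v != u) && (v \notin nbhd S u)]| =
          #|[set~ u] :\: nbhd S u|.
  by apply: eq_card => v; rewrite !inE andbC.
rewrite cardsD (setIidPr (nbhd_subC1 uSu)) cardsC1 card_ord -addnn addnBA //.
exact: card_nbhd_le.
Qed.

Lemma max_tdist S u : u \notin S u ->
  \max_v tdist S u v = (0 < n.-1) + (#|nbhd S u| < n.-1).
Proof.
move=> uSu; have C1_card : #|[set~ u]| = n.-1 by rewrite cardsC1 card_ord.
apply/eqP; rewrite eqn_leq; apply/andP; split.
  apply/bigmax_leqP => v _; rewrite tdistE; have [//|vu] /= := eqVneq v u.
  have -> : 0 < n.-1 by have := neq_ord_gt1 vu; lia.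
  case: (boolP (v \in nbhd S u)) => //= vN.
  rewrite -C1_card proper_card //; apply/properP; split; first exact: nbhd_subC1.
  by exists v => //; rewrite !inE.
have [ltN|_] := ltnP #|nbhd S u| n.-1.
  have /subsetPn [v vC1 vN] : ~~ ([set~ u] \subset nbhd S u).
    by apply: contraTN ltN => /subset_leq_card; rewrite C1_card -leqNgt.
  rewrite !inE in vC1; apply: leq_trans (leq_bigmax v); rewrite tdistE vC1 vN /=.
  by rewrite leq_add2r leq_b1.
have [//|n1_gt0] := posnP n.-1.
have /card_gt0P [v] : 0 < #|[set~ u]| by rewrite C1_card.
rewrite !inE => vu; apply: leq_trans (leq_bigmax v); rewrite tdistE vu.
by rewrite addn0 leq_addr.
Qed.

Lemma dist_le_cMAX S u v : dist S u v <= cMAX S u.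
Proof. exact: leq_trans (leq_bigmax v) (leq_addr _ _). Qed.

Lemma ncomp_le S : ncomp S <= n.
Proof. by rewrite -{2}(card_ord n); apply: max_card. Qed.

Lemma tdist_eq_dist S u v : cMAX S u <= 2 -> tdist S u v = dist S u v.
Proof. by move=> le2; apply/minn_idPl/(leq_trans (dist_le_cMAX S u v)). Qed.

Lemma cMAX_tdist S u : cMAX S u <= 2 -> cMAX S u = \max_v tdist S u v.
Proof.
move=> le2; under eq_bigr do rewrite tdist_eq_dist //.
rewrite /cMAX; suff -> : (ncomp S - 1) * n ^ 2 = 0 by rewrite addn0.
have: (ncomp S - 1) * n ^ 2 <= 2 by apply: leq_trans le2; apply: leq_addl.
have := ncomp_le S; rewrite -mulnn; nia.
Qed.

Lemma max_tdist_le_cMAX S u : \max_v tdist S u v <= cMAX S u.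
Proof.
by apply/bigmax_leqP => v _; apply: leq_trans (geq_minl _ _) (dist_le_cMAX _ _ _).
Qed.

Lemma cSUM_tdist S u : cMAX S u <= 2 -> cSUM S u = \sum_v tdist S u v.
Proof. by move=> le2; apply: eq_bigr => v _; rewrite tdist_eq_dist. Qed.

Lemma sum_tdist_le_cSUM S u : \sum_v tdist S u v <= cSUM S u.
Proof. by apply: leq_sum => v _; apply: geq_minl. Qed.

Lemma nbhd_deviate S u T : u \notin T ->
  nbhd (deviate S u T) u \subset T :|: buyers S u.
Proof.
move=> uT; apply/subsetP => v; rewrite !inE /adjU /deviate eqxx.
case/orP=> [->//|]; case: eqP => [->|_ ->]; last exact: orbT.
by rewrite (negbTE uT).
Qed.

Lemma card_nbhd_no_brace S u : ~ in_brace S u ->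
  #|nbhd S u| = #|S u| + #|buyers S u|.
Proof.
move=> no_brace.
have -> : nbhd S u = S u :|: buyers S u by apply/setP => v; rewrite !inE.
rewrite cardsU; suff -> : S u :&: buyers S u = set0 by rewrite cards0 subn0.
apply/setP => v; rewrite !inE; apply/negP => /andP[vSu uSv].
by apply: no_brace; exists v.
Qed.

Lemma nbhd_cMAX1 S u : cMAX S u = 1 -> [set~ u] \subset nbhd S u.
Proof.
move=> c1; apply/subsetP => v; rewrite !inE => vu; apply/negPn/negP => nadj.
have := dist_ge2 vu nadj; have := dist_le_cMAX S u v.
by rewrite c1; case: dist => [|[]].
Qed.

Lemma card_nbhd_deviate b S u T : realization b S -> u \notin T -> #|T| = b u ->
  ~ in_brace S u \/ cMAX S u = 1 ->
  #|nbhd (deviate S u T) u| <= #|nbhd S u|.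
Proof.
move=> hS uT cT [no_brace|c1].
  apply: leq_trans (subset_leq_card (nbhd_deviate S uT)) _.
  rewrite card_nbhd_no_brace //; have [_ ->] := hS u.
  by rewrite -cT leq_card_setU.
apply: leq_trans (card_nbhd_le _) _; first by rewrite /deviate eqxx.
by have := subset_leq_card (nbhd_cMAX1 c1); rewrite cardsC1 card_ord.
Qed.

End NetworkCreation.

Theorem mainTheorem12 (n : nat) (b : 'I_n -> nat) (S : profile n) (u : 'I_n) :
  (forall i : 'I_n, b i <= n - 1) ->
  realization b S ->
  ((cMAX S u <= 2 /\ ~ in_brace S u) \/ cMAX S u = 1) ->
  best_response (@cMAX n) b S u /\ best_response (@cSUM n) b S u.
Proof.
move=> _ hS hc.
have [uSu _] := hS u.
have le2 : cMAX S u <= 2 by case: hc => [[]|->].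
have hc' : ~ in_brace S u \/ cMAX S u = 1 by case: hc => [[_ ?]|?]; [left|right].
split=> T uT cT; set S' := deviate S u T.
all: have le_nbhd : #|nbhd S' u| <= #|nbhd S u| := card_nbhd_deviate hS uT cT hc'.
all: have uS'u : u \notin S' u by rewrite /S' /deviate eqxx.
- rewrite cMAX_tdist // max_tdist //; apply: leq_trans (max_tdist_le_cMAX S' u).
  rewrite max_tdist // leq_add2l.
  by have [/(leq_ltn_trans le_nbhd) ->|] := ltnP #|nbhd S u| n.-1.
- rewrite cSUM_tdist // sum_tdist //; apply: leq_trans (sum_tdist_le_cSUM S' u).
  by rewrite sum_tdist // leq_sub2l.
Qed.
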